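(* In the setting described in the context, if type B blowup occurs, then either $0<v_0<1$ and $\omega_0<-\frac{\nu}{2}f_\infty(v_0)$, or $v_0>1$ and $\omega_0>-\frac{\nu}{2}f_\infty(v_0)$.
   Context: Fix $\nu>0$, $v_0>0$ with $v_0\neq1$, and $\omega_0\in\mathbb{R}$. Consider the real ODE system $\frac{d\omega_{-2,i}}{dt}=\omega_{-2,i}^2\frac{1-2v_c^2+5v_c^4}{4v_c^2(1-v_c^2)^2}-\nu\omega_{-2,i}$, $\frac{dv_c}{dt}=-\omega_{-2,i}\frac{1+v_c^2}{4v_c(1-v_c^2)}$ with $v_c(0)=v_0$, $\omega_{-2,i}(0)=\omega_0$; its solution (continued through $v_c=1$) is characterized as follows. Let $F(v)=\frac{v(v^2-1)}{(v^2+1)^2}+\arctan v$, which is a strictly increasing bijection from $(0,\infty)$ onto $(0,\pi/2)$, and let $G(t)=F(v_0)+\frac{2\omega_0 v_0(1-e^{-\nu t})}{\nu(v_0^2-1)(v_0^2+1)^2}$. Then $v_c(t)$ is defined by $F(v_c(t))=G(t)$ for as long as $G(t)\in(0,\pi/2)$, and $\omega_{-2,i}(t)=\omega_0e^{-\nu t}\frac{v_0}{v_c(t)}\frac{v_c(t)^2-1}{v_0^2-1}\left(\frac{v_c(t)^2+1}{v_0^2+1}\right)^2$. Type A blowup means: there is a finite $t_c>0$ with $v_c(t)>0$ on $[0,t_c)$ and $v_c(t)\to0^+$ as $t\to t_c^-$. Type B blowup means: there is a finite $t_c>0$ with $v_c(t)\in(0,\infty)$ on $[0,t_c)$ and $v_c(t)\to+\infty$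 as $t\to t_c^-$. Here $f_0(x)=(x^2-1)^2+\frac{(x^2+1)^2}{x}(x^2-1)\arctan(x)$ and $f_\infty(x)=(x^2-1)^2+\frac{(x^2+1)^2}{x}(x^2-1)\left(\arctan(x)-\frac{\pi}{2}\right)$ for $x>0$. *)

From Stdlib Require Import Reals Lra.
From Coquelicot Require Import Coquelicot.
Open Scope R_scope.

Definition Fv (v : R) : R := v * (v ^ 2 - 1) / (v ^ 2 + 1) ^ 2 + atan v.

Definition Gt (nu v0 w0 t : R) : R :=
  Fv v0 + 2 * w0 * v0 * (1 - exp (- nu * t))
          / (nu * (v0 ^ 2 - 1) * (v0 ^ 2 + 1) ^ 2).

Definition f_inf (x : R) : R :=
  (x ^ 2 - 1) ^ 2 + (x ^ 2 + 1) ^ 2 / x * (x ^ 2 - 1) * (atan x - PI / 2).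

Definition typeB_blowup (nu v0 w0 : R) : Prop :=
  exists (vc : R -> R) (tc : R),
    0 < tc /\
    (forall t, 0 <= t < tc -> 0 < vc t /\ Fv (vc t) = Gt nu v0 w0 t) /\
    filterlim vc (at_left tc) (Rbar_locally p_infty).

(* Along the solution F(v_c(t)) = G(t) = F(v0) + c (1 - e^{-nu t}), where
   c = 2 w0 v0 / (nu (v0^2-1) (v0^2+1)^2).  Since F(v) >= pi/2 - 1/v for v >= 1,
   v_c -> +oo forces G(t) to approach pi/2 before t_c.  If c <= pi/2 - F(v0),
   then G stays below F(v0) + (pi/2 - F(v0)) (1 - e^{-nu t_c}) < pi/2, so type B
   blowup needs c > pi/2 - F(v0); multiplying this by nu (v0^2-1) (v0^2+1)^2 / (2 v0)
   is exactly the claimed inequality on w0, the sign of v0^2 - 1 fixing its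
   direction. *)

From Stdlib Require Import Reals Lra.
From Coquelicot Require Import Coquelicot.
Open Scope R_scope.

Lemma atan_le_id u : 0 < u -> atan u <= u.
Proof.
  intros Hu.
  destruct (MVT_cor2 atan (fun x => / (1 + x ^ 2)) 0 u Hu) as [c [Hc _]].
  { intros; apply derivable_pt_lim_atan. }
  rewrite atan_0 in Hc.
  assert (0 < / (1 + c ^ 2) <= 1).
  { split.
    - apply Rinv_0_lt_compat; nra.
    - rewrite <- Rinv_1; apply Rinv_le_contravar; nra. }
  nra.
Qed.

Lemma atan_ge_cubic u : 0 < u -> u - u ^ 3 / 3 <= atan u.
Proof.
  intros Hu.
  destruct (MVT_cor2 (fun x => atan x - x + x ^ 3 / 3)
              (fun x => / (1 + x ^ 2) - 1 + x ^ 2) 0 u Hu) as [c [Hc _]].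
  { intros c _.
    replace (/ (1 + c ^ 2) - 1 + c ^ 2)
      with ((/ (1 + c ^ 2) - 1) + (INR 3 * c ^ (pred 3) * / 3))
      by (simpl; field; nra).
    apply (derivable_pt_lim_plus (fun x => atan x - x) (fun x => x ^ 3 / 3)).
    - apply (derivable_pt_lim_minus atan id).
      + apply derivable_pt_lim_atan.
      + apply derivable_pt_lim_id.
    - apply (derivable_pt_lim_scal_right (fun x => x ^ 3)).
      apply derivable_pt_lim_pow. }
  rewrite atan_0 in Hc.
  assert (0 <= / (1 + c ^ 2) - 1 + c ^ 2).
  { replace (/ (1 + c ^ 2) - 1 + c ^ 2) with (c ^ 4 / (1 + c ^ 2)) by (field; nra).
    apply Rdiv_le_0_compat; nra. }
  nra.
Qed.

Lemma Fv_lt_PI2 v : 0 < v -> Fv v < PI / 2.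
Proof.
  intros Hv. unfold Fv.
  destruct (Rle_lt_dec v 1) as [Hle | Hgt].
  - assert (v * (v ^ 2 - 1) / (v ^ 2 + 1) ^ 2 <= 0).
    { apply Rmult_le_0_r; [nra |].
      apply Rlt_le, Rinv_0_lt_compat, pow_lt; nra. }
    destruct (atan_bound v). lra.
  - (* with u = 1/v the rational part becomes u (1 - u^2) / (1 + u^2)^2 <= u - u^3,
       which the cubic lower bound on atan u beats *)
    set (u := / v).
    assert (Hu : 0 < u < 1).
    { split.
      - apply Rinv_0_lt_compat; lra.
      - unfold u; rewrite <- Rinv_1; apply Rinv_lt_contravar; lra. }
    assert (Hatan : atan v = PI / 2 - atan u) by (unfold u; rewrite atan_inv by lra; ring).
    assert (Hrat : v * (v ^ 2 - 1) / (v ^ 2 + 1) ^ 2 = u * (1 - u ^ 2) / (1 + u ^ 2) ^ 2)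
      by (unfold u; field; split; nra).
    assert (Hshrink : u * (1 - u ^ 2) / (1 + u ^ 2) ^ 2 <= u * (1 - u ^ 2)).
    { assert (/ (1 + u ^ 2) ^ 2 <= 1).
      { rewrite <- Rinv_1; apply Rinv_le_contravar; nra. }
      unfold Rdiv; assert (0 <= u * (1 - u ^ 2)) by nra. nra. }
    pose proof (atan_ge_cubic u (proj1 Hu)).
    assert (0 < u ^ 3) by (apply pow_lt; lra).
    rewrite Hatan, Hrat. nra.
Qed.

Lemma Fv_ge v : 1 <= v -> PI / 2 - / v <= Fv v.
Proof.
  intros Hv. unfold Fv.
  assert (0 <= v * (v ^ 2 - 1) / (v ^ 2 + 1) ^ 2).
  { apply Rdiv_le_0_compat; [nra | apply pow_lt; nra]. }
  assert (atan v = PI / 2 - atan (/ v)) by (rewrite atan_inv by lra; ring).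
  assert (atan (/ v) <= / v) by (apply atan_le_id, Rinv_0_lt_compat; lra).
  lra.
Qed.

Lemma Fv_bound_ge_PI2_of_blowup (vc : R -> R) (tc M : R) :
  0 < tc ->
  (forall t, 0 <= t < tc -> Fv (vc t) <= M) ->
  filterlim vc (at_left tc) (Rbar_locally p_infty) ->
  PI / 2 <= M.
Proof.
  intros Htc Hbound Hlim.
  destruct (Rle_lt_dec (PI / 2) M) as [| HM]; [assumption | exfalso].
  set (V := Rmax 1 (/ (PI / 2 - M))).
  assert (Hlarge : at_left tc (fun t => V < vc t)) by (apply Hlim; exists V; auto).
  assert (Hpos : at_left tc (fun t => 0 < t)).
  { apply filter_le_within. exact (open_gt 0 tc Htc). }
  assert (Hbefore : at_left tc (fun t => t < tc)) by (exists (mkposreal 1 Rlt_0_1); auto).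
  destruct (filter_ex _ (filter_and _ _ Hlarge (filter_and _ _ Hpos Hbefore)))
    as [t [Hvt [Ht0 Httc]]].
  assert (HV1 : 1 <= V) by apply Rmax_l.
  assert (HVM : / (PI / 2 - M) <= V) by apply Rmax_r.
  pose proof (Hbound t (conj (Rlt_le _ _ Ht0) Httc)).
  pose proof (Fv_ge (vc t) ltac:(lra)).
  assert (/ vc t < PI / 2 - M).
  { rewrite <- (Rinv_inv (PI / 2 - M)).
    apply Rinv_lt_contravar; [| lra].
    apply Rmult_lt_0_compat; [apply Rinv_0_lt_compat |]; lra. }
  lra.
Qed.

Definition G_amplitude (nu v0 w0 : R) : R :=
  2 * w0 * v0 / (nu * (v0 ^ 2 - 1) * (v0 ^ 2 + 1) ^ 2).

Lemma Gt_amplitude nu v0 w0 t :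
  Gt nu v0 w0 t = Fv v0 + G_amplitude nu v0 w0 * (1 - exp (- nu * t)).
Proof. unfold Gt, G_amplitude, Rdiv. ring. Qed.

Lemma Gt_le_of_amplitude_le nu v0 w0 tc t :
  0 < nu -> 0 < v0 -> 0 < tc -> 0 <= t < tc ->
  G_amplitude nu v0 w0 <= PI / 2 - Fv v0 ->
  Gt nu v0 w0 t <= Fv v0 + (PI / 2 - Fv v0) * (1 - exp (- nu * tc)).
Proof.
  intros Hnu Hv0 Htc [Ht0 Httc] Hamp.
  rewrite Gt_amplitude.
  pose proof (Fv_lt_PI2 v0 Hv0).
  assert (exp (- nu * tc) < exp (- nu * t)) by (apply exp_increasing; nra).
  assert (exp (- nu * t) <= 1).
  { destruct Ht0 as [Ht0 | <-].
    - rewrite <- exp_0; left; apply exp_increasing; nra.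
    - rewrite Rmult_0_r, exp_0; lra. }
  pose proof (exp_pos (- nu * tc)).
  nra.
Qed.

Lemma typeB_blowup_amplitude nu v0 w0 :
  0 < nu -> 0 < v0 ->
  typeB_blowup nu v0 w0 -> PI / 2 - Fv v0 < G_amplitude nu v0 w0.
Proof.
  intros Hnu Hv0 [vc [tc [Htc [Hsol Hlim]]]].
  destruct (Rlt_le_dec (PI / 2 - Fv v0) (G_amplitude nu v0 w0)) as [| Hamp];
    [assumption | exfalso].
  assert (Hbound : forall t, 0 <= t < tc ->
            Fv (vc t) <= Fv v0 + (PI / 2 - Fv v0) * (1 - exp (- nu * tc))).
  { intros t Ht. rewrite (proj2 (Hsol t Ht)). now apply Gt_le_of_amplitude_le. }
  pose proof (Fv_bound_ge_PI2_of_blowup vc tc _ Htc Hbound Hlim).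
  pose proof (Fv_lt_PI2 v0 Hv0).
  assert (0 < exp (- nu * tc)) by apply exp_pos.
  nra.
Qed.

Lemma w0_f_inf_gap nu v0 w0 :
  0 < nu -> 0 < v0 -> v0 ^ 2 - 1 <> 0 ->
  w0 + nu / 2 * f_inf v0 =
  (G_amplitude nu v0 w0 - (PI / 2 - Fv v0)) * (v0 ^ 2 - 1)
  * (nu * (v0 ^ 2 + 1) ^ 2 / (2 * v0)).
Proof.
  intros Hnu Hv0 Hsq.
  unfold G_amplitude, f_inf, Fv.
  field. repeat split; try lra; try assumption; nra.
Qed.

Theorem lemma3p4 (nu v0 w0 : R) :
  0 < nu -> 0 < v0 -> v0 <> 1 ->
  typeB_blowup nu v0 w0 ->
  (0 < v0 < 1 /\ w0 < - (nu / 2) * f_inf v0) \/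
  (1 < v0 /\ w0 > - (nu / 2) * f_inf v0).
Proof.
  intros Hnu Hv0 Hv1 Hblow.
  pose proof (typeB_blowup_amplitude nu v0 w0 Hnu Hv0 Hblow) as Hamp.
  assert (Hscale : 0 < nu * (v0 ^ 2 + 1) ^ 2 / (2 * v0))
    by (apply Rdiv_lt_0_compat; [apply Rmult_lt_0_compat; [| apply pow_lt] |]; nra).
  destruct (Rlt_le_dec v0 1) as [Hlt | Hge].
  - assert (Hsq : v0 ^ 2 - 1 < 0) by nra.
    assert ((G_amplitude nu v0 w0 - (PI / 2 - Fv v0)) * (v0 ^ 2 - 1) < 0) by nra.
    pose proof (w0_f_inf_gap nu v0 w0 Hnu Hv0 ltac:(lra)).
    left. split; [lra | nra].
  - assert (Hsq : 0 < v0 ^ 2 - 1) by (destruct Hge; [nra | congruence]).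
    assert (0 < (G_amplitude nu v0 w0 - (PI / 2 - Fv v0)) * (v0 ^ 2 - 1)) by nra.
    pose proof (w0_f_inf_gap nu v0 w0 Hnu Hv0 ltac:(lra)).
    right. split; [lra | nra].
Qed.
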